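(* A Boolean function $f:\{0,1\}^n\to\{0,1\}^m$ is fully balanced if and only if its image $\operatorname{img}(f)$ is an affine subspace of $\mathbb{F}_2^m$ and the fibre size $\#f^{-1}(\mathbf{w})$ is the same for every $\mathbf{w}\in\operatorname{img}(f)$.
   Context: Strings in $\{0,1\}^k$ are identified with vectors of $\mathbb{F}_2^k$; $\mathbf{a}\cdot\mathbf{b}=\bigoplus_i a_ib_i$ (mod 2). For $\mathbf{y}\in\{0,1\}^m$, $f$ is $\mathbf{y}$-balanced if $f(\mathbf{x})\cdot\mathbf{y}=0$ for exactly half of the $\mathbf{x}\in\{0,1\}^n$ and $=1$ for the other half, and $\mathbf{y}$-constant if $f(\mathbf{x})\cdot\mathbf{y}$ is the same for all $\mathbf{x}$. $f$ is fully balanced if for every $\mathbf{y}\in\{0,1\}^m$, $f$ is either $\mathbf{y}$-balanced or $\mathbf{y}$-constant. *)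

From HB Require Import structures.
From mathcomp Require Import all_boot all_order all_algebra.
Set Implicit Arguments. Unset Strict Implicit. Unset Printing Implicit Defensive.
Import GRing.Theory.
Local Open Scope ring_scope.

Notation bvec k := 'rV['F_2]_k.

Definition dotF2 (k : nat) (a b : bvec k) : 'F_2 := \sum_(i < k) a 0 i * b 0 i.

Definition y_balanced (n m : nat) (f : bvec n -> bvec m) (y : bvec m) : Prop :=
  (2 * #|[set x : bvec n | dotF2 (f x) y == 0%R]| = 2 ^ n)%N /\
  (2 * #|[set x : bvec n | dotF2 (f x) y == 1%R]| = 2 ^ n)%N.

Definition y_constant (n m : nat) (f : bvec n -> bvec m) (y : bvec m) : Prop :=
  forall x x' : bvec n, dotF2 (f x) y = dotF2 (f x') y.

Definition fully_balanced (n m : nat) (f : bvec n -> bvec m) : Prop :=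
  forall y : bvec m, y_balanced f y \/ y_constant f y.

Definition img (n m : nat) (f : bvec n -> bvec m) : {set bvec m} :=
  [set f x | x in [set: bvec n]].

Definition affine_subspace (m : nat) (S : {set bvec m}) : Prop :=
  exists (a : bvec m) (U : {vspace bvec m}), S = [set a + u | u in [set u | u \in U]].

From HB Require Import structures.
From mathcomp Require Import all_boot all_order all_algebra.
Set Implicit Arguments. Unset Strict Implicit. Unset Printing Implicit Defensive.
Import GRing.Theory Num.Theory.
Local Open Scope ring_scope.

(* Everything is read off the character sums S(y) = \sum_x (-1)^(f x . y).
   Being y-balanced means S(y) = 0 and being y-constant means |S(y)| = 2^n.
   If the image is a + U with fibres of size c, then S(y) is c times a sum over
   a + U, which vanishes as soon as some u in U has u . y = 1 (translating by u
   negates every term).  Conversely, Fourier inversion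
   2^m #f^-1(w) = \sum_y (-1)^(w . y) S(y) only involves the space V of
   y-constant directions, so all w in f 0 + V^perp have the same fibre size,
   which is positive since f 0 is hit.  As img f - f 0 spans a subspace of
   V^perp, img f is the affine span of itself. *)

Lemma F2_cases (b : 'F_2) : b = 0 \/ b = 1.
Proof. by case: b => [[|[|//]]] ?; [left|right]; apply: val_inj. Qed.

Definition chi (b : 'F_2) : int := (-1) ^+ b.

Lemma chi1 : chi 1 = -1. Proof. by []. Qed.

Lemma chiD a b : chi (a + b) = chi a * chi b.
Proof. by case: (F2_cases a) => ->; case: (F2_cases b) => ->. Qed.

Lemma chiB a b : chi (a - b) = chi a * chi b.
Proof. by case: (F2_cases a) => ->; case: (F2_cases b) => ->. Qed.

Lemma chi_sq a : chi a * chi a = 1.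
Proof. by case: (F2_cases a) => ->. Qed.

Lemma dotDl k (a b y : bvec k) : dotF2 (a + b) y = dotF2 a y + dotF2 b y.
Proof. by rewrite /dotF2 -big_split; apply: eq_bigr => i _; rewrite mxE mulrDl. Qed.

Lemma dotDr k (a b y : bvec k) : dotF2 y (a + b) = dotF2 y a + dotF2 y b.
Proof. by rewrite /dotF2 -big_split; apply: eq_bigr => i _; rewrite mxE mulrDr. Qed.

Lemma dotBl k (a b y : bvec k) : dotF2 (a - b) y = dotF2 a y - dotF2 b y.
Proof. by rewrite /dotF2 -sumrB; apply: eq_bigr => i _; rewrite !mxE mulrBl. Qed.

Lemma dot0l k (y : bvec k) : dotF2 0 y = 0.
Proof. by rewrite /dotF2 big1 // => i _; rewrite mxE mul0r. Qed.

Lemma dot_suml k (I : finType) (c : I -> 'F_2) (X : I -> bvec k) y :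
  dotF2 (\sum_i c i *: X i) y = \sum_i c i * dotF2 (X i) y.
Proof.
rewrite /dotF2; under eq_bigr do rewrite summxE mulr_suml.
rewrite exchange_big; apply: eq_bigr => i _.
by rewrite mulr_sumr; apply: eq_bigr => j _; rewrite mxE mulrA.
Qed.

Lemma dot_delta k (z : bvec k) i : dotF2 z (delta_mx 0 i) = z 0 i.
Proof.
rewrite /dotF2 (bigD1 i) //= big1 ?addr0; first by rewrite mxE !eqxx mulr1.
by move=> j /negbTE ji; rewrite mxE ji andbF mulr0.
Qed.

Lemma dot_span_eq0 k (X : seq (bvec k)) y :
  {in X, forall x, dotF2 x y = 0} -> {in <<X>>%VS, forall u, dotF2 u y = 0}.
Proof.
move=> X0 u /(@coord_span _ _ _ (in_tuple X)) ->; rewrite dot_suml big1 // => i _.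
by rewrite X0 ?mulr0 // mem_nth.
Qed.

Lemma card_bvec k : #|{: bvec k}| = (2 ^ k)%N.
Proof. by rewrite card_mx card_Fp // mul1n. Qed.

Lemma sum_shift_opp_eq0 (G : finZmodType) (F : G -> int) (u : G) :
  (forall x, F (x + u) = - F x) -> \sum_x F x = 0.
Proof.
move=> FuN; suff: (\sum_x F x) *+ 2 = 0 by move/eqP; rewrite mulrn_eq0 => /eqP.
rewrite mulr2n {1}(reindex_inj (addIr u)) /=.
by under eq_bigr do rewrite FuN; rewrite sumrN addNr.
Qed.

Lemma sum_chi_dot k (z : bvec k) :
  \sum_y chi (dotF2 z y) = if z == 0 then (2 ^ k)%N%:Z else 0.
Proof.
case: eqP => [->|/eqP nz].
  rewrite (eq_bigr (fun _ => 1)) => [|y _]; last by rewrite dot0l.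
  by rewrite sumr_const card_bvec pmulrn intz.
have [i zi] : exists i, z 0 i != 0.
  apply/existsP; apply: contraR nz => /existsPn z0; apply/eqP/matrixP => r j.
  by rewrite ord1 mxE; move/negPn/eqP: (z0 j).
have zi1 : z 0 i = 1 by case: (F2_cases (z 0 i)) zi => ->.
apply: (@sum_shift_opp_eq0 _ _ (delta_mx 0 i)) => y.
by rewrite dotDr dot_delta zi1 chiD chi1 mulrN1.
Qed.

Lemma sum_chi_card (T : finType) (b : T -> 'F_2) :
  \sum_x chi (b x) = #|[set x | b x == 0]|%:Z - #|[set x | b x == 1]|%:Z.
Proof.
rewrite (bigID (fun x => b x == 0)) /= (eq_bigr (fun _ => 1)) => [|x /eqP ->] //.
rewrite [X in _ + X](eq_bigr (fun _ => -1)) => [|x]; last by case: (F2_cases (b x)) => ->.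
rewrite !sumr_const mulNrn !natz; congr (Posz _ - Posz _); apply: eq_card => x;
  by rewrite unfold_in !inE /=; case: (F2_cases (b x)) => ->.
Qed.

Lemma balanced_sum_chi (T : finType) (b : T -> 'F_2) :
  (2 * #|[set x | b x == 0%R]| = #|T| /\ 2 * #|[set x | b x == 1%R]| = #|T|)%N
  <-> \sum_x chi (b x) = 0.
Proof.
have cardT : (#|[set x | b x == 0%R]| + #|[set x | b x == 1%R]| = #|T|)%N.
  rewrite -(cardsC [set x | b x == 0]); congr (_ + _)%N; apply: eq_card => x.
  by rewrite !inE; case: (F2_cases (b x)) => ->.
rewrite sum_chi_card; split=> [[eq0 eq1]|/eqP].
  by apply/eqP; rewrite subr_eq0 eqz_nat -(@eqn_pmul2l 2) // eq0 eq1.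
by rewrite subr_eq0 eqz_nat -cardT => /eqP <-; rewrite mul2n -addnn.
Qed.

Lemma sum_over_fibres (T W : finType) (R : pzRingType) (f : T -> W) (F : W -> R) :
  \sum_x F (f x) = \sum_w #|[set x | f x == w]|%:R * F w.
Proof.
rewrite (partition_big f predT) //=; apply: eq_bigr => w _.
rewrite (eq_bigr (fun _ => F w)) => [|x /eqP ->] //.
rewrite sumr_const mulr_natl; congr (_ *+ _).
by apply: eq_card => x; rewrite unfold_in inE.
Qed.

Section FullyBalanced.

Variables (n m : nat) (f : bvec n -> bvec m).

Local Notation fibre w := [set x | f x == w].

Lemma mem_img x : f x \in img f.
Proof. by apply/imsetP; exists x; rewrite ?inE. Qed.

Lemma y_balanced_sum_chi y :
  y_balanced f y <-> \sum_x chi (dotF2 (f x) y) = 0.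
Proof. by rewrite /y_balanced -card_bvec; apply: balanced_sum_chi. Qed.

Lemma card_fibre_affine a (U : {vspace bvec m}) c :
  img f = [set a + u | u in [set u | u \in U]] ->
  {in img f, forall w, #|fibre w| = c} ->
  forall w, #|fibre w| = if w - a \in U then c else 0%N.
Proof.
move=> imgE fibc w; have -> : (w - a \in U) = (w \in img f).
  rewrite imgE; apply/idP/imsetP => [Uw|[u]]; last first.
    by rewrite inE => Uu ->; rewrite addrC addKr.
  by exists (w - a); rewrite ?inE // addrC subrK.
case: ifP => [/fibc //|imgNw]; apply/eqP; rewrite cards_eq0; apply/eqP/setP => x.
by rewrite !inE; apply: contraFF imgNw => /eqP <-; apply: mem_img.
Qed.

Lemma affine_img_fully_balanced :
  affine_subspace (img f) ->
  (exists c : nat, {in img f, forall w, #|fibre w| = c}) ->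
  fully_balanced f.
Proof.
case=> a [U imgE] [c fibc] y; have cardE := card_fibre_affine imgE fibc.
have [U_y0|] := boolP [forall u, (u \in U) ==> (dotF2 u y == 0)].
  right=> x x'; suff dot_a z : z \in img f -> dotF2 z y = dotF2 a y.
    by rewrite !dot_a ?mem_img.
  rewrite imgE => /imsetP[u]; rewrite inE => Uu ->.
  by rewrite dotDl (eqP (implyP (forallP U_y0 u) Uu)) addr0.
rewrite negb_forall => /existsP[u0]; rewrite negb_imply => /andP[Uu0 u0y].
have u0y1 : dotF2 u0 y = 1 by case: (F2_cases (dotF2 u0 y)) u0y => ->.
left; apply/y_balanced_sum_chi.
rewrite (sum_over_fibres f (fun w => chi (dotF2 w y))).
apply: (@sum_shift_opp_eq0 _ _ u0) => w.
rewrite dotDl u0y1 chiD chi1 mulrN1 mulrN !cardE addrAC.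
by rewrite (rpredDr (w - a) Uu0).
Qed.

Definition const_dirs := [set y | [forall x, dotF2 (f x) y == dotF2 (f 0) y]].

Lemma sum_chi_fully_balanced y : fully_balanced f ->
  \sum_x chi (dotF2 (f x) y) =
  if y \in const_dirs then (2 ^ n)%N%:Z * chi (dotF2 (f 0) y) else 0.
Proof.
move=> fb; case: ifPn => [|Vy].
  rewrite inE => /forallP fy; rewrite (eq_bigr (fun _ => chi (dotF2 (f 0) y))) => [|x _].
    by rewrite sumr_const card_bvec -mulr_natl natz.
  by rewrite (eqP (fy x)).
case: (fb y) => [/y_balanced_sum_chi //| yc].
by case/negP: Vy; rewrite inE; apply/forallP => x; rewrite (yc x 0).
Qed.

Lemma card_fibre_fourier w :
  ((2 ^ m) * #|fibre w|)%N%:Z =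
  \sum_y chi (dotF2 w y) * \sum_x chi (dotF2 (f x) y).
Proof.
under eq_bigr do rewrite mulr_sumr.
rewrite exchange_big /=.
under eq_bigr do under eq_bigr do rewrite mulrC -chiB -dotBl.
under eq_bigr do rewrite sum_chi_dot subr_eq0.
rewrite -big_mkcond sumr_const -mulr_natr natz -PoszM.
by congr (Posz (_ * _)); apply: eq_card => x; rewrite inE unfold_in.
Qed.

Lemma card_fibre_const_dirs w : fully_balanced f ->
  {in const_dirs, forall y, dotF2 w y = dotF2 (f 0) y} ->
  #|fibre w| = #|fibre (f 0)|.
Proof.
move=> fb wV.
suff card_dirs z : {in const_dirs, forall y, dotF2 z y = dotF2 (f 0) y} ->
    ((2 ^ m) * #|fibre z|)%N%:Z = \sum_(y in const_dirs) (2 ^ n)%N%:Z.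
  apply/eqP; rewrite -(@eqn_pmul2l (2 ^ m)) ?expn_gt0 // -eqz_nat.
  by rewrite card_dirs // (card_dirs (f 0)).
move=> zV; rewrite card_fibre_fourier.
under eq_bigr do rewrite sum_chi_fully_balanced // mulrC.
rewrite (bigID (mem const_dirs)) /= addrC big1 ?add0r => [|y /negbTE -> //].
  by apply: eq_bigr => y Vy; rewrite Vy zV // -mulrA chi_sq mulr1.
by rewrite mul0r.
Qed.

Lemma fully_balanced_affine_img : fully_balanced f ->
  affine_subspace (img f) /\
  exists c : nat, {in img f, forall w, #|fibre w| = c}.
Proof.
move=> fb; pose a := f 0; pose U := <<[seq f x - a | x : bvec n]>>%VS.
have dirs_img x : {in const_dirs, forall y, dotF2 (f x) y = dotF2 a y}.
  by move=> y; rewrite inE => /forallP/(_ x)/eqP.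
have dirs_U u : u \in U -> {in const_dirs, forall y, dotF2 (a + u) y = dotF2 a y}.
  move=> Uu y Vy; rewrite dotDl (dot_span_eq0 _ Uu) ?addr0 //.
  by move=> _ /imageP[x _ ->]; rewrite dotBl dirs_img ?subrr.
split; last by exists #|fibre a| => _ /imsetP[x _ ->]; apply/card_fibre_const_dirs.
exists a, U; apply/setP => w; apply/imsetP/imsetP => [[x _ ->]|[u]].
  exists (f x - a); last by rewrite addrC subrK.
  by rewrite inE memv_span //; apply/imageP; exists x.
rewrite inE => /dirs_U/(card_fibre_const_dirs fb) fibE ->.
have /set0Pn[x] : fibre (a + u) != set0.
  by rewrite -cards_eq0 fibE cards_eq0; apply/set0Pn; exists 0; rewrite inE.
by rewrite inE => /eqP <-; exists x; rewrite ?inE.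
Qed.

End FullyBalanced.

Theorem mainTheorem3 (n m : nat) (f : 'rV['F_2]_n -> 'rV['F_2]_m) :
  fully_balanced f <->
  (affine_subspace (img f) /\
   exists c : nat, forall w, w \in img f -> #|[set x | f x == w]| = c).
Proof.
split; first exact: fully_balanced_affine_img.
by case; apply: affine_img_fully_balanced.
Qed.
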